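(* For $I\subseteq\mathbb{N}$ and unitaries $u=(u(i))_{i\in\mathbb{N}}$, $v=(v(i))_{i\in\mathbb{N}}$ of $\ell^\infty(M_m(\mathbb{C}))$, let $\Delta_I(u,v)=\sup_{i,j\in I}\|u(i)u(j)^*-v(i)v(j)^*\|$. Then for all $I\subseteq\mathbb{N}$ and all such $u,v$: (1) $\Delta_I(u,v)\le 2\sup_{i\in I}\|u(i)-v(i)\|$; (2) $\Delta_I(u,v)\ge\sup_{j\in I}\|u(j)-v(j)\|-\inf_{i\in I}\|u(i)-v(i)\|$; in particular, if $u(k)=v(k)$ for some $k\in I$, then $\Delta_I(u,v)\ge\sup_{j\in I}\|u(j)-v(j)\|$; (3) if $w$ is a unitary in $M_m(\mathbb{C})$, then $\Delta_I(u,v)=\Delta_I(u,vw)$, where $(vw)(i)=v(i)w$; (4) if $J\subseteq\mathbb{N}$ and $I\cap J\neq\emptyset$, then $\Delta_{I\cup J}(u,v)\le\Delta_I(u,v)+\Delta_J(u,v)$; (5) $\inf_{w}\sup_{i\in I}\|u(i)-v(i)w\|\le\Delta_I(u,v)\le 2\inf_{w}\sup_{i\in I}\|u(i)-v(i)w\|$, where $w$ ranges over the unitary group of $M_m(\mathbb{C})$.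
   Context: $m\ge1$; $\ell^\infty(M_m(\mathbb{C}))$ is the $\mathrm{C}^*$-algebra of norm-bounded sequences of $m\times m$ complex matrices, so a unitary $u$ of it is a sequence $(u(i))_{i\in\mathbb{N}}$ of unitary matrices; norms are operator norms on $M_m(\mathbb{C})$. *)

From HB Require Import structures.
From mathcomp Require Import all_boot all_order all_algebra.
From mathcomp Require Import all_classical all_reals.
From mathcomp Require Import complex.
Set Implicit Arguments. Unset Strict Implicit. Unset Printing Implicit Defensive.
Import Order.TTheory GRing.Theory Num.Theory ComplexField.
Local Open Scope classical_set_scope.
Local Open Scope ring_scope.

(* Complex numbers: R[i] = complex R over a realType R (so that sup/inf exist). *)

Definition adjmx (R : realType) (m : nat) (A : 'M[R[i]]_m) : 'M[R[i]]_m :=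
  (map_mx Num.conj A)^T.

Definition unitary_mx (R : realType) (m : nat) (A : 'M[R[i]]_m) : Prop :=
  A *m adjmx A = 1%:M.

Definition vnorm (R : realType) (m : nat) (x : 'cV[R[i]]_m) : R :=
  Num.sqrt (\sum_(k < m) (complex.Re (x k 0) ^+ 2 + complex.Im (x k 0) ^+ 2)).

Definition opnorm (R : realType) (m : nat) (A : 'M[R[i]]_m) : R :=
  sup [set vnorm (A *m x) | x in [set x : 'cV[R[i]]_m | vnorm x <= 1]].

(* Delta_I(u,v) = sup_{i,j in I} || u(i) u(j)^* - v(i) v(j)^* ||  (sup of empty set is 0) *)
Definition Delta (R : realType) (m : nat) (I : set nat) (u v : nat -> 'M[R[i]]_m) : R :=
  sup [set opnorm (u ij.1 *m adjmx (u ij.2) - v ij.1 *m adjmx (v ij.2))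
      | ij in [set ij : nat * nat | I ij.1 /\ I ij.2]].

Definition supdist (R : realType) (m : nat) (I : set nat) (u v : nat -> 'M[R[i]]_m) : R :=
  sup [set opnorm (u i - v i) | i in I].

Definition infdist (R : realType) (m : nat) (I : set nat) (u v : nat -> 'M[R[i]]_m) : R :=
  inf [set opnorm (u i - v i) | i in I].

(* The operator norm is subadditive and invariant under multiplication by
   unitaries on either side.  For unitary u_j, v_j, v_i and u_k the identity
     u_i u_k^* - v_i v_k^* = [u_i u_j^* - v_i v_j^*] u_j u_k^*
                             + v_i v_j^* [u_j u_k^* - v_j v_k^*]
   therefore gives delta(i,k) <= delta(i,j) + delta(j,k) for
   delta(i,j) = ||u_i u_j^* - v_i v_j^*||, which is (4).  Taking the pair of
   identity matrices as the middle or the last index compares delta with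
   ||u_i - v_i||, giving (1) and (2).  (3) holds because
   v_i w (v_j w)^* = v_i v_j^*.  The unitary w = v_k^* u_k turns delta(i,k)
   into ||u_i - v_i w||, which gives the lower bound in (5); (3) and (1) give
   the upper one. *)

From HB Require Import structures.
From mathcomp Require Import all_boot all_order all_algebra.
From mathcomp Require Import all_classical all_reals.
From mathcomp Require Import complex.
From mathcomp Require Import lra.
Import Order.TTheory GRing.Theory Num.Theory ComplexField.
Set Implicit Arguments. Unset Strict Implicit. Unset Printing Implicit Defensive.
Local Open Scope classical_set_scope.
Local Open Scope ring_scope.
Local Open Scope sesquilinear_scope.
Local Open Scope complex_scope.

Section Adjoint.
Variables (R : realType) (m : nat).
Implicit Types (A B U : 'M[R[i]]_m).

Lemma adjmxE A : adjmx A = A ^t*.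
Proof. by rewrite /adjmx map_trmx. Qed.

Lemma adjmxM A B : adjmx (A *m B) = adjmx B *m adjmx A.
Proof. by rewrite /adjmx map_mxM trmx_mul. Qed.

Lemma adjmx1 : adjmx (1%:M : 'M[R[i]]_m) = 1%:M.
Proof. by rewrite adjmxE trmx1 map_mx1. Qed.

Lemma unitary_mxP U : reflect (unitary_mx U) (U \is unitarymx).
Proof. by rewrite /unitary_mx adjmxE; exact: unitarymxP. Qed.

Lemma unitarymx1 : (1%:M : 'M[R[i]]_m) \is unitarymx.
Proof. by apply/unitarymxP; rewrite trmx1 map_mx1 mulmx1. Qed.

Lemma adj_unitarymx U : U \is unitarymx -> U^t* \is unitarymx.
Proof. by rewrite trmxC_unitary. Qed.

End Adjoint.
Arguments unitarymx1 {R m}.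

Section ColumnNorm.
Variables (R : realType) (m : nat).
Implicit Types (x y : 'cV[R[i]]_m) (U : 'M[R[i]]_m).

Lemma vnorm_ge0 x : 0 <= vnorm x. Proof. exact: sqrtr_ge0. Qed.

Lemma dotmx_trmx x : dotmx x^T x^T = (vnorm x ^+ 2)%:C.
Proof.
rewrite dotmxE sqr_sqrtr ?sumr_ge0// => [|k _]; last by rewrite addr_ge0 ?sqr_ge0.
rewrite !mxE rmorph_sum; apply: eq_bigr => k _.
by rewrite !mxE /= add_Re2_Im2 sqr_normc.
Qed.

Lemma vnorm_sqrtC x : (vnorm x)%:C = sqrtC (dotmx x^T x^T).
Proof. by rewrite dotmx_trmx rmorphXn sqrCK // ler0c vnorm_ge0. Qed.

Lemma vnormD x y : vnorm (x + y) <= vnorm x + vnorm y.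
Proof.
rewrite -lecR rmorphD /= !vnorm_sqrtC linearD.
exact: (triangle_lerif (@dotmx _ m) _ _).1.
Qed.

Lemma vnorm0 : vnorm (0 : 'cV[R[i]]_m) = 0.
Proof. by apply: complexI; rewrite vnorm_sqrtC trmx0 linear0l sqrtC0. Qed.

Lemma vnormN x : vnorm (- x) = vnorm x.
Proof. by apply: complexI; rewrite !vnorm_sqrtC linearN linearNl linearNr opprK. Qed.

Lemma vnormZ (c : R[i]) x : (vnorm (c *: x))%:C = `|c| * (vnorm x)%:C.
Proof.
rewrite !vnorm_sqrtC linearZ /= dnormZ.
by rewrite sqrtCM ?nnegrE ?exprn_ge0 ?dnorm_ge0 // sqrCK.
Qed.

Lemma norm_entry_le_vnorm x j : `|x j 0| <= (vnorm x)%:C.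
Proof.
rewrite normc_def lecR ler_sqrt ?sumr_ge0 // => [|k _]; last by rewrite addr_ge0 ?sqr_ge0.
by rewrite (bigD1 j) //= lerDl sumr_ge0 // => k _; rewrite addr_ge0 ?sqr_ge0.
Qed.

Lemma vnorm_sum (I : finType) (F : I -> 'cV[R[i]]_m) :
  vnorm (\sum_k F k) <= \sum_k vnorm (F k).
Proof.
apply: (big_ind2 (fun x r => vnorm x <= r)) => // [|x1 r1 x2 r2 le1 le2].
  by rewrite vnorm0.
exact: le_trans (vnormD _ _) (lerD le1 le2).
Qed.

Lemma vnorm_unitary U x : U \is unitarymx -> vnorm (U *m x) = vnorm x.
Proof.
move=> hU; apply: complexI; rewrite !vnorm_sqrtC !dotmxE !trmx_mul map_mxM.
by rewrite mulmxA mulmxtVK ?trmx_unitary.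
Qed.

End ColumnNorm.

Section OperatorNorm.
Variables (R : realType) (m : nat).
Implicit Types (A B U : 'M[R[i]]_m) (x : 'cV[R[i]]_m).

Lemma vnorm_mulmx_le_sum_col A x : vnorm x <= 1 -> vnorm (A *m x) <= \sum_j vnorm (col j A).
Proof.
move=> x_le1.
have -> : A *m x = \sum_j x j 0 *: col j A.
  apply/matrixP => i k; rewrite !mxE summxE; apply: eq_bigr => j _.
  by rewrite !mxE (ord1 k) mulrC.
apply: le_trans (vnorm_sum _) _; apply: ler_sum => j _.
rewrite -lecR vnormZ ler_piMl ?ler0c ?vnorm_ge0 //.
by apply: le_trans (norm_entry_le_vnorm _ _) _; rewrite lecR.
Qed.

Lemma has_sup_opnorm A :
  has_sup [set vnorm (A *m x) | x in [set x : 'cV[R[i]]_m | vnorm x <= 1]].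
Proof.
split; first by exists (vnorm (A *m 0)), 0 => //=; rewrite vnorm0 ler01.
by exists (\sum_j vnorm (col j A)) => _ [x x_le1 <-]; exact: vnorm_mulmx_le_sum_col.
Qed.

Lemma opnorm_ge A x : vnorm x <= 1 -> vnorm (A *m x) <= opnorm A.
Proof. by move=> x_le1; apply: sup_upper_bound (has_sup_opnorm A) _ _; exists x. Qed.

Lemma opnorm_le A c : (forall x, vnorm x <= 1 -> vnorm (A *m x) <= c) -> opnorm A <= c.
Proof.
move=> Ac; apply: ge_sup => [|_ [x /Ac le_c <-] //].
by case: (has_sup_opnorm A).
Qed.

Lemma opnorm_ge0 A : 0 <= opnorm A.
Proof. by apply: le_trans (vnorm_ge0 (A *m 0)) (opnorm_ge _ _); rewrite vnorm0 ler01. Qed.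

Lemma opnorm0 : opnorm (0 : 'M[R[i]]_m) = 0.
Proof.
apply/eqP; rewrite eq_le opnorm_ge0 andbT.
by apply: opnorm_le => x _; rewrite mul0mx vnorm0.
Qed.

Lemma opnormD A B : opnorm (A + B) <= opnorm A + opnorm B.
Proof.
apply: opnorm_le => x x_le1; rewrite mulmxDl.
exact: le_trans (vnormD _ _) (lerD (opnorm_ge _ x_le1) (opnorm_ge _ x_le1)).
Qed.

Lemma opnormN A : opnorm (- A) = opnorm A.
Proof.
apply/eqP; rewrite eq_le; apply/andP; split; apply: opnorm_le => x x_le1.
  by rewrite mulNmx vnormN opnorm_ge.
by rewrite -vnormN -mulNmx opnorm_ge.
Qed.

Lemma opnormB A B : opnorm (A - B) <= opnorm A + opnorm B.
Proof. by rewrite -(opnormN B) opnormD. Qed.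

Lemma opnorm_mulUl U A : U \is unitarymx -> opnorm (U *m A) = opnorm A.
Proof.
move=> hU; apply/eqP; rewrite eq_le; apply/andP; split; apply: opnorm_le => x x_le1.
  by rewrite -mulmxA vnorm_unitary // opnorm_ge.
by rewrite -(vnorm_unitary _ hU) mulmxA opnorm_ge.
Qed.

Lemma opnorm_mulUr U A : U \is unitarymx -> opnorm (A *m U) = opnorm A.
Proof.
move=> hU; apply/eqP; rewrite eq_le; apply/andP; split; apply: opnorm_le => x x_le1.
  by rewrite -mulmxA opnorm_ge // vnorm_unitary.
have -> : A *m x = A *m U *m (U^t* *m x) by rewrite mulmxA mulmxtVK.
by apply: opnorm_ge; rewrite vnorm_unitary ?trmxC_unitary.
Qed.

Lemma opnorm_unitary_le1 U : U \is unitarymx -> opnorm U <= 1.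
Proof. by move=> hU; apply: opnorm_le => x; rewrite vnorm_unitary. Qed.

End OperatorNorm.

Section UnitaryDifferences.
Variables (R : realType) (m : nat).
Implicit Types (U V : 'M[R[i]]_m).

Lemma opnormB_unitary_le2 U V :
  U \is unitarymx -> V \is unitarymx -> opnorm (U - V) <= 2.
Proof.
move=> hU hV; apply: le_trans (opnormB _ _) _.
by rewrite -[2]/(1 + 1); apply: lerD; exact: opnorm_unitary_le1.
Qed.

Lemma opnorm_cocycle U1 U2 U3 V1 V2 V3 :
    U2 \is unitarymx -> U3 \is unitarymx -> V1 \is unitarymx -> V2 \is unitarymx ->
  opnorm (U1 *m adjmx U3 - V1 *m adjmx V3) <=
  opnorm (U1 *m adjmx U2 - V1 *m adjmx V2) + opnorm (U2 *m adjmx U3 - V2 *m adjmx V3).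
Proof.
move=> hU2 hU3 hV1 hV2; rewrite !adjmxE.
have -> : U1 *m U3^t* - V1 *m V3^t* =
    (U1 *m U2^t* - V1 *m V2^t*) *m (U2 *m U3^t*) +
    (V1 *m V2^t*) *m (U2 *m U3^t* - V2 *m V3^t*).
  rewrite mulmxBl mulmxBr !mulmxA (mulmxKtV _ hU2 erefl) (mulmxKtV _ hV2 erefl).
  by rewrite addrA subrK.
apply: le_trans (opnormD _ _) _.
rewrite (opnorm_mulUr _ (mul_unitarymx hU2 (adj_unitarymx hU3))).
by rewrite (opnorm_mulUl _ (mul_unitarymx hV1 (adj_unitarymx hV2))).
Qed.

Lemma opnorm_adjB U V :
  U \is unitarymx -> V \is unitarymx -> opnorm (adjmx U - adjmx V) = opnorm (U - V).
Proof.
move=> hU hV; rewrite !adjmxE.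
have UtU : U^t* *m U = 1%:M by rewrite -[U^t*]mul1mx (mulmxKtV _ hU erefl).
have -> : U^t* - V^t* = U^t* *m (V - U) *m V^t*.
  by rewrite mulmxBr mulmxBl (mulmxtVK _ hV) UtU mul1mx.
rewrite (opnorm_mulUr _ (adj_unitarymx hV)) (opnorm_mulUl _ (adj_unitarymx hU)).
by rewrite -opprB opnormN.
Qed.

Lemma opnorm_mul_adjB_le U1 U2 V1 V2 :
    U2 \is unitarymx -> V1 \is unitarymx -> V2 \is unitarymx ->
  opnorm (U1 *m adjmx U2 - V1 *m adjmx V2) <= opnorm (U1 - V1) + opnorm (U2 - V2).
Proof.
move=> hU2 hV1 hV2.
have := @opnorm_cocycle U1 1%:M U2 V1 1%:M V2 unitarymx1 hU2 hV1 unitarymx1.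
by rewrite adjmx1 !mulmx1 !mul1mx (opnorm_adjB hU2 hV2).
Qed.

Lemma opnormB_le_mul_adjB U1 U2 V1 V2 :
    U2 \is unitarymx -> V1 \is unitarymx -> V2 \is unitarymx ->
  opnorm (U1 - V1) <= opnorm (U1 *m adjmx U2 - V1 *m adjmx V2) + opnorm (U2 - V2).
Proof.
move=> hU2 hV1 hV2.
have := @opnorm_cocycle U1 U2 1%:M V1 V2 1%:M hU2 unitarymx1 hV1 hV2.
by rewrite adjmx1 !mulmx1.
Qed.

End UnitaryDifferences.

Section SupImage.
Variables (R : realType) (T : Type) (P : set T) (f : T -> R).

(* [0 <= c] covers [P = set0], whose [sup] is [0]. *)
Lemma sup_image_le c : 0 <= c -> (forall t, P t -> f t <= c) -> sup (f @` P) <= c.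
Proof.
move=> c_ge0 f_le; have [->|/set0P [t Pt]] := eqVneq P set0.
  by rewrite image_set0 sup0.
by apply: ge_sup => [|_ [s Ps <-]]; [exists (f t), t | exact: f_le].
Qed.

Lemma le_sup_image c t : (forall s, P s -> f s <= c) -> P t -> f t <= sup (f @` P).
Proof.
move=> f_le Pt; apply: sup_upper_bound; last by exists t.
by split; [exists (f t), t | exists c => _ [s Ps <-]; exact: f_le].
Qed.

Lemma sup_image_ge0 c : (forall t, P t -> 0 <= f t <= c) -> 0 <= sup (f @` P).
Proof.
move=> f_bnd; have [->|/set0P [t Pt]] := eqVneq P set0.
  by rewrite image_set0 sup0.
have /andP[f_ge0 _] := f_bnd t Pt; apply: le_trans f_ge0 (le_sup_image (c := c) _ Pt).
by move=> s /f_bnd /andP[].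
Qed.

Lemma inf_image_le t : (forall s, P s -> 0 <= f s) -> P t -> inf (f @` P) <= f t.
Proof.
move=> f_ge0 Pt; apply: ge_inf; last by exists t.
by exists 0 => _ [s Ps <-]; exact: f_ge0.
Qed.

Lemma le_inf_image c : P !=set0 -> (forall t, P t -> c <= f t) -> c <= inf (f @` P).
Proof.
move=> [t Pt] le_f; apply: lb_le_inf => [|_ [s Ps <-]]; last exact: le_f.
by exists (f t), t.
Qed.

End SupImage.

Section Delta.
Variables (R : realType) (m : nat) (u v : nat -> 'M[R[i]]_m).
Hypotheses (hu : forall i, u i \is unitarymx) (hv : forall i, v i \is unitarymx).
Implicit Types (I J : set nat).

Local Notation dist i := (opnorm (u i - v i)).
Local Notation delta i j := (opnorm (u i *m adjmx (u j) - v i *m adjmx (v j))).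

Lemma delta_le2 i j : delta i j <= 2.
Proof.
by apply: opnormB_unitary_le2; rewrite adjmxE; apply: mul_unitarymx; rewrite ?adj_unitarymx.
Qed.

Lemma le_Delta I i j : I i -> I j -> delta i j <= Delta I u v.
Proof.
move=> Ii Ij.
apply: (le_sup_image (f := fun ij => delta ij.1 ij.2) (c := 2) (t := (i, j))) => //.
by move=> [a b] _; exact: delta_le2.
Qed.

Lemma Delta_le I c :
  0 <= c -> (forall i j, I i -> I j -> delta i j <= c) -> Delta I u v <= c.
Proof. by move=> c_ge0 le_c; apply: sup_image_le => // -[i j] [/= Ii Ij]; exact: le_c. Qed.

Lemma Delta_ge0 I : 0 <= Delta I u v.
Proof.
by apply: (sup_image_ge0 (c := 2)) => -[i j] _; rewrite opnorm_ge0 delta_le2.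
Qed.

Lemma le_supdist I i : I i -> dist i <= supdist I u v.
Proof.
apply: (le_sup_image (f := fun i => dist i) (c := 2)) => j _.
exact: opnormB_unitary_le2.
Qed.

Lemma supdist_le I c : 0 <= c -> (forall i, I i -> dist i <= c) -> supdist I u v <= c.
Proof. exact: sup_image_le. Qed.

Lemma supdist_ge0 I : 0 <= supdist I u v.
Proof.
by apply: (sup_image_ge0 (c := 2)) => i _; rewrite opnorm_ge0 opnormB_unitary_le2.
Qed.

Lemma infdist_le I i : I i -> infdist I u v <= dist i.
Proof. by apply: inf_image_le => j _; exact: opnorm_ge0. Qed.

Lemma le_infdist I c : I !=set0 -> (forall i, I i -> c <= dist i) -> c <= infdist I u v.
Proof. exact: le_inf_image. Qed.

Lemma Delta_le_twice_supdist I : Delta I u v <= 2 * supdist I u v.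
Proof.
apply: Delta_le => [|i j Ii Ij]; first by rewrite mulr_ge0 ?supdist_ge0.
apply: le_trans (opnorm_mul_adjB_le (u i) (hu j) (hv i) (hv j)) _.
by rewrite mulr_natl mulr2n; exact: lerD (le_supdist Ii) (le_supdist Ij).
Qed.

Lemma supdist_sub_infdist_le_Delta I : supdist I u v - infdist I u v <= Delta I u v.
Proof.
have [->|I_ne] := eqVneq I set0.
  by rewrite /supdist /infdist !image_set0 sup0 inf0 subr0 Delta_ge0.
have supdist_le_at i : I i -> supdist I u v <= Delta I u v + dist i.
  move=> Ii; apply: supdist_le => [|j Ij]; first by rewrite addr_ge0 ?Delta_ge0 ?opnorm_ge0.
  apply: le_trans (opnormB_le_mul_adjB (u j) (hu i) (hv j) (hv i)) _.
  by rewrite lerD2r le_Delta.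
have : supdist I u v - Delta I u v <= infdist I u v.
  by apply: le_infdist => [|i Ii]; [exact/set0P | rewrite lerBlDl supdist_le_at].
move=> le_inf; lra.
Qed.

Lemma supdist_le_Delta I k : I k -> u k = v k -> supdist I u v <= Delta I u v.
Proof.
move=> Ik ukv; have := supdist_sub_infdist_le_Delta I; have := infdist_le Ik.
rewrite ukv subrr opnorm0 => inf_le0 le_Delta; lra.
Qed.

Lemma Delta_mulmxr I w :
  w \is unitarymx -> Delta I u v = Delta I u (fun i => v i *m w).
Proof.
move=> hw; rewrite /Delta; apply: congr1; apply: eq_imagel => -[i j] _ /=.
by rewrite adjmxM mulmxA [adjmx w]adjmxE (mulmxtVK _ hw).
Qed.

Lemma Delta_setU_le I J :
  I `&` J != set0 -> Delta (I `|` J) u v <= Delta I u v + Delta J u v.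
Proof.
case/set0P => k [Ik Jk]; have DI := Delta_ge0 I; have DJ := Delta_ge0 J.
apply: Delta_le => [|i j [Ii|Ji] [Ij|Jj]]; first by rewrite addr_ge0.
- have := le_Delta Ii Ij; lra.
- apply: le_trans (opnorm_cocycle (u i) (v j) (hu k) (hu j) (hv i) (hv k)) _.
  exact: lerD (le_Delta Ii Ik) (le_Delta Jk Jj).
- apply: le_trans (opnorm_cocycle (u i) (v j) (hu k) (hu j) (hv i) (hv k)) _.
  by rewrite addrC; exact: lerD (le_Delta Ik Ij) (le_Delta Ji Jk).
- have := le_Delta Ji Jj; lra.
Qed.

End Delta.

Section Alignment.
Variables (R : realType) (m : nat) (u v : nat -> 'M[R[i]]_m).
Hypotheses (hu : forall i, u i \is unitarymx) (hv : forall i, v i \is unitarymx).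
Variable I : set nat.

Local Notation alignment :=
  (inf [set supdist I u (fun i => v i *m w) | w in [set w | unitary_mx w]]).

Lemma alignment_le_Delta : alignment <= Delta I u v.
Proof.
have [w hw w_le] : exists2 w, w \is unitarymx &
    forall i, I i -> opnorm (u i - v i *m w) <= Delta I u v.
  have [->|/set0P [k Ik]] := eqVneq I set0.
    by exists 1%:M; [exact: unitarymx1 | move=> i []].
  exists (adjmx (v k) *m u k) => [|i Ii].
    by rewrite adjmxE; apply: mul_unitarymx; rewrite ?adj_unitarymx.
  have -> : u i - v i *m (adjmx (v k) *m u k) =
      (u i *m adjmx (u k) - v i *m adjmx (v k)) *m u k.
    by rewrite mulmxBl mulmxA [adjmx (u k)]adjmxE (mulmxKtV _ (hu k) erefl).
  by rewrite (opnorm_mulUr _ (hu k)); exact: le_Delta.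
apply: le_trans (inf_image_le (t := w) _ _) _; [|exact/unitary_mxP|].
- move=> w' /unitary_mxP hw'; apply: (supdist_ge0 hu) => i.
  exact: mul_unitarymx (hv i) hw'.
- exact: supdist_le (Delta_ge0 hu hv I) w_le.
Qed.

Lemma Delta_le_twice_alignment : Delta I u v <= 2 * alignment.
Proof.
have : Delta I u v / 2 <= alignment.
  apply: le_inf_image => [|w /unitary_mxP hw].
    by exists 1%:M; exact/unitary_mxP/unitarymx1.
  have hvw i : v i *m w \is unitarymx := mul_unitarymx (hv i) hw.
  have := Delta_le_twice_supdist hu hvw I; rewrite -(Delta_mulmxr u v I hw).
  move=> le_supdist; lra.
move=> le_half; lra.
Qed.

End Alignment.

Theorem lemma4p2 (R : realType) (m : nat) (m_gt0 : (0 < m)%N)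
  (I : set nat) (u v : nat -> 'M[R[i]]_m)
  (hu : forall i, unitary_mx (u i)) (hv : forall i, unitary_mx (v i)) :
  [/\ Delta I u v <= 2 * supdist I u v,
      Delta I u v >= supdist I u v - infdist I u v
      /\ ((exists2 k, I k & u k = v k) -> Delta I u v >= supdist I u v),
      (forall w : 'M[R[i]]_m, unitary_mx w ->
         Delta I u v = Delta I u (fun i => v i *m w)),
      (forall J : set nat, I `&` J != set0 ->
         Delta (I `|` J) u v <= Delta I u v + Delta J u v) &
      let d := inf [set supdist I u (fun i => v i *m w)
                   | w in [set w : 'M[R[i]]_m | unitary_mx w]] in
      d <= Delta I u v /\ Delta I u v <= 2 * d].
Proof.
have {}hu i : u i \is unitarymx by apply/unitary_mxP; exact: hu.
have {}hv i : v i \is unitarymx by apply/unitary_mxP; exact: hv.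
split.
- exact: Delta_le_twice_supdist.
- split; first exact: supdist_sub_infdist_le_Delta.
  by case=> k Ik ukv; exact: supdist_le_Delta Ik ukv.
- by move=> w /unitary_mxP hw; exact: Delta_mulmxr.
- by move=> J; exact: Delta_setU_le.
- by split; [exact: alignment_le_Delta | exact: Delta_le_twice_alignment].
Qed.
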